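(* Let $A,B\in\mathcal{S}_n$ and $x\in\mathbb{R}^n$. There exists a maximal lower bound $C$ of $A$ and $B$ in the Löwner order such that $Ax=Cx$ if and only if $x^TAx<x^TBx$ or $Ax=Bx$.
   Context: $\mathcal{S}_n$ is the set of real symmetric $n\times n$ matrices. Löwner order: $X\preceq Y$ iff $y^TXy\le y^TYy$ for all $y$. A maximal lower bound of $A,B$ is a $C\in\mathcal{S}_n$ with $C\preceq A$, $C\preceq B$ such that no $C'\ne C$ with $C\preceq C'$ satisfies $C'\preceq A$, $C'\preceq B$. *)

From HB Require Import structures.
From mathcomp Require Import all_boot all_order all_algebra.
Set Implicit Arguments. Unset Strict Implicit. Unset Printing Implicit Defensive.
Import Order.TTheory GRing.Theory Num.Theory.
Local Open Scope ring_scope.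

Definition symmx (R : rcfType) (n : nat) (X : 'M[R]_n) : Prop := X^T = X.

Definition qform (R : rcfType) (n : nat) (X : 'M[R]_n) (y : 'cV[R]_n) : R :=
  (y^T *m X *m y) 0 0.

Definition loewner_le (R : rcfType) (n : nat) (X Y : 'M[R]_n) : Prop :=
  forall y : 'cV[R]_n, qform X y <= qform Y y.

Definition maximal_lower_bound (R : rcfType) (n : nat) (A B C : 'M[R]_n) : Prop :=
  [/\ symmx C, loewner_le C A, loewner_le C B &
      forall C' : 'M[R]_n, symmx C' -> loewner_le C C' ->
        loewner_le C' A -> loewner_le C' B -> C' = C].

From HB Require Import structures.
From Stdlib Require Import Classical.
From mathcomp Require Import all_boot all_order all_algebra ring lra.
Import Order.TTheory GRing.Theory Num.Theory.
Set Implicit Arguments.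
Unset Strict Implicit.
Unset Printing Implicit Defensive.
Local Open Scope ring_scope.

(* Write D := B - A. The key object is a splitting D = Y - X into positive
   semidefinite X, Y whose kernels together span the whole space. Then
   C := A - X is a maximal lower bound: any C' with C <= C' <= A, B differs
   from C by some P with 0 <= P <= X and 0 <= P <= Y, so P vanishes on
   ker X + ker Y, i.e. P = 0. Such splittings are built by induction on the
   rank of D, peeling off one rank-one term (D z)(D z)^T / z^T D z at a time;
   starting with z := x when x^T D x > 0 makes x a kernel vector of X, which
   gives A x = C x. Conversely, if C <= B and x^T C x = x^T A x = x^T B x,
   then x is isotropic for the semidefinite B - C, hence C x = B x. *)

Section LowerBounds.
Variables (R : rcfType) (n : nat).
Implicit Types (D M N P X Y : 'M[R]_n) (u w y z : 'cV[R]_n).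

Definition psdmx M := forall y, 0 <= qform M y.

Lemma qformD M N y : qform (M + N) y = qform M y + qform N y.
Proof. by rewrite /qform mulmxDr mulmxDl mxE. Qed.

Lemma qformN M y : qform (- M) y = - qform M y.
Proof. by rewrite /qform mulmxN mulNmx mxE. Qed.

Lemma qformB M N y : qform (M - N) y = qform M y - qform N y.
Proof. by rewrite qformD qformN. Qed.

Lemma qformZ a M y : qform (a *: M) y = a * qform M y.
Proof. by rewrite /qform -scalemxAr -scalemxAl mxE. Qed.

Lemma loewner_leE X Y : loewner_le X Y <-> psdmx (Y - X).
Proof.
by split=> H y; [rewrite qformB subr_ge0 | rewrite -subr_ge0 -qformB].
Qed.

Lemma trmxB_sym M N : M^T = M -> N^T = N -> (M - N)^T = M - N.
Proof. by move=> sM sN; rewrite raddfB /= sM sN. Qed.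

Lemma trmx11 (a : 'M[R]_1) : a^T 0 0 = a 0 0.
Proof. by rewrite mxE. Qed.

Lemma dotmxC u w : (u^T *m w) 0 0 = (w^T *m u) 0 0.
Proof. by rewrite -trmx11 trmx_mul trmxK. Qed.

Lemma bilinear_symC M u w : M^T = M -> (u^T *m M *m w) 0 0 = (w^T *m M *m u) 0 0.
Proof. by move=> sM; rewrite -trmx11 !trmx_mul trmxK sM mulmxA. Qed.

Lemma dotmx_self_eq0 u : (u^T *m u) 0 0 = 0 -> u = 0.
Proof.
rewrite mxE => /eqP; rewrite psumr_eq0 => [/allP uu0|i _]; last first.
  by rewrite !mxE sqr_ge0.
apply/matrixP => i j; rewrite (ord1 j) !mxE.
by have /implyP/(_ isT) := uu0 i (mem_index_enum _); rewrite !mxE mulf_eq0 orbb => /eqP.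
Qed.

Lemma qform_shift M u w t : M^T = M ->
  qform M (u + t *: w) =
  qform M u + 2 * t * (w^T *m M *m u) 0 0 + t ^+ 2 * qform M w.
Proof.
move=> sM; rewrite /qform.
have -> : (u + t *: w)^T = u^T + t *: w^T by rewrite linearD linearZ.
rewrite !mulmxDl !mulmxDr -!scalemxAl -!scalemxAr.
rewrite ![((_ + _)%R : 'M_1) 0 0]mxE ![(_ *: (_ : 'M_1)) 0 0]mxE.
rewrite (bilinear_symC u w sM); ring.
Qed.

(* Perturbing y along M y, nonnegativity of the form forces (M y)^T M y = 0. *)
Lemma psd_isotropic_ker M y : M^T = M -> psdmx M -> qform M y = 0 -> M *m y = 0.
Proof.
move=> sM psdM qy0; pose u := M *m y.
pose a := (u^T *m M *m y) 0 0; pose b := qform M u.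
have b_ge0 : 0 <= b by apply: psdM.
have := psdM (y + (- a / (b + 1)) *: u).
rewrite qform_shift // qy0 add0r -/a -/b => shift_ge0.
have a0 : a = 0.
  have b1_gt0 : 0 < b + 1 by lra.
  have expand : (2 * (- a / (b + 1)) * a + (- a / (b + 1)) ^+ 2 * b) * (b + 1) ^+ 2
      = - (a ^+ 2) * (b + 2) by field; rewrite gt_eqF.
  have : 0 <= - (a ^+ 2) * (b + 2).
    by rewrite -expand mulr_ge0 // exprn_ge0 // ltW.
  nra.
by apply: dotmx_self_eq0; rewrite -a0 /a /u mulmxA.
Qed.

Lemma loewner_le_qform_eq X Y y : X^T = X -> Y^T = Y -> loewner_le X Y ->
  qform X y = qform Y y -> X *m y = Y *m y.
Proof.
move=> sX sY /loewner_leE leXY qXY; apply/eqP; rewrite eq_sym -subr_eq0 -mulmxBl.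
by apply/eqP/psd_isotropic_ker; rewrite ?trmxB_sym // qformB qXY subrr.
Qed.

Lemma psd_le_ker P X y : P^T = P -> psdmx P -> psdmx (X - P) ->
  X *m y = 0 -> P *m y = 0.
Proof.
move=> sP psdP psdXP Xy0; apply: psd_isotropic_ker => //.
have := psdXP y; rewrite qformB {1}/qform -mulmxA Xy0 mulmx0 mxE sub0r oppr_ge0.
by move=> qP_le0; apply/eqP; rewrite eq_le qP_le0 psdP.
Qed.

Lemma mulmx_cV_eq0 M : (forall y, M *m y = 0) -> M = 0.
Proof.
move=> My0; apply/matrixP => i j.
by have /matrixP/(_ i 0) := My0 (delta_mx j 0); rewrite -colE !mxE.
Qed.

Lemma sym_qform_eq0 D : D^T = D -> (forall z, qform D z = 0) -> D = 0.
Proof.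
move=> sD q0; apply: mulmx_cV_eq0 => y.
have := q0 (y + 1 *: (D *m y)); rewrite qform_shift // !q0 add0r mulr0 addr0.
rewrite mulr1 => /eqP; rewrite mulf_eq0 pnatr_eq0 /= => /eqP yDDy0.
by apply: dotmx_self_eq0; rewrite -yDDy0 mulmxA.
Qed.

Lemma sym_anisotropic D : D^T = D -> D != 0 -> exists z, qform D z != 0.
Proof.
move=> sD /eqP D_neq0; apply: NNPP => none; apply/D_neq0/sym_qform_eq0 => // z.
by apply/eqP/contraT => qz; case: none; exists z.
Qed.

Lemma outer_mulmx u y : (u *m u^T) *m y = (u^T *m y) 0 0 *: u.
Proof. by set a := (u^T *m y) 0 0; rewrite -mulmxA [u^T *m y]mx11_scalar mul_mx_scalar. Qed.

Lemma qform_outer u y : qform (u *m u^T) y = (u^T *m y) 0 0 ^+ 2.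
Proof.
rewrite /qform mulmxA -(mulmxA (y^T *m u)) [LHS]mxE big_ord1.
by rewrite (dotmxC y u) expr2.
Qed.

Definition kernels_span X Y :=
  forall w, exists k1 k2, [/\ w = k1 + k2, X *m k1 = 0 & Y *m k2 = 0].

Inductive psd_splitting D X Y : Prop :=
  PsdSplitting of X^T = X & Y^T = Y & psdmx X & psdmx Y & Y - X = D &
    kernels_span X Y & (forall w, D *m w = 0 -> X *m w = 0 /\ Y *m w = 0).

Lemma psd_splitting0 : psd_splitting 0 0 0.
Proof.
have psd0 : psdmx 0 by move=> y; rewrite /qform mulmx0 mul0mx mxE.
split; rewrite ?trmx0 ?subrr // => w.
by exists w, 0; rewrite addr0 !mul0mx.
Qed.

Lemma psd_splittingN D X Y : psd_splitting D X Y -> psd_splitting (- D) Y X.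
Proof.
case=> sX sY psdX psdY <- span kerD; split; rewrite ?opprB // => w.
  by have [k1 [k2 [-> Xk1 Yk2]]] := span w; exists k2, k1; rewrite addrC.
by rewrite -opprB mulNmx => /eqP; rewrite oppr_eq0 => /eqP /kerD [].
Qed.

(* Rank-one deflation of D along z; when z^T D z = 0 the junk value is D. *)
Definition deflate D z := D - (qform D z)^-1 *: ((D *m z) *m (D *m z)^T).

Lemma dotmx_mulmx_sym D u z : D^T = D -> ((D *m z)^T *m u) = z^T *m (D *m u).
Proof. by move=> sD; rewrite trmx_mul sD mulmxA. Qed.

Lemma deflate_sym D z : D^T = D -> (deflate D z)^T = deflate D z.
Proof. by move=> sD; rewrite raddfB /= linearZ /= sD trmx_mul trmxK. Qed.

Lemma deflateN D z : deflate (- D) z = - deflate D z.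
Proof.
rewrite /deflate qformN invrN mulNmx raddfN /= mulNmx mulmxN opprK scaleNr.
by rewrite opprB opprK addrC.
Qed.

Lemma dotmx_qform D z : ((D *m z)^T *m z) 0 0 = qform D z.
Proof. by rewrite dotmxC /qform mulmxA. Qed.

Lemma deflate_mulmx D z : qform D z != 0 -> deflate D z *m z = 0.
Proof.
move=> qz; rewrite /deflate mulmxBl -scalemxAl outer_mulmx dotmx_qform.
by rewrite scalerA mulVf // scale1r subrr.
Qed.

Lemma deflate_ker D z w : D^T = D -> D *m w = 0 ->
  ((D *m z)^T *m w) 0 0 = 0 /\ deflate D z *m w = 0.
Proof.
move=> sD Dw0; have Dzw0 : ((D *m z)^T *m w) 0 0 = 0.
  by rewrite dotmx_mulmx_sym // Dw0 mulmx0 mxE.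
by rewrite /deflate mulmxBl -scalemxAl outer_mulmx Dzw0 Dw0 scale0r scaler0 subr0.
Qed.

Lemma mxrank_deflate D z : D^T = D -> qform D z != 0 ->
  (\rank (deflate D z) < \rank D)%N.
Proof.
move=> sD qz; have Dz0 : D *m z != 0.
  by apply: contraNneq qz; rewrite /qform -mulmxA => ->; rewrite mulmx0 mxE.
have defF : deflate D z = (1%:M - (qform D z)^-1 *: ((D *m z) *m z^T)) *m D.
  by rewrite /deflate mulmxBl mul1mx -scalemxAl -(mulmxA (D *m z)) trmx_mul sD.
suff : (deflate D z < D)%MS by rewrite ltmxErank => /andP [].
rewrite ltmxE {1}defF submxMl /=; apply: contra Dz0 => /submxP [F ->].
by rewrite -mulmxA deflate_mulmx ?mulmx0.
Qed.

Lemma psd_splitting_deflate D z X' Y' : D^T = D -> 0 < qform D z ->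
  psd_splitting (deflate D z) X' Y' ->
  exists Y, psd_splitting D X' Y /\ X' *m z = 0.
Proof.
move=> sD qz_gt0 [sX sY psdX psdY defD span kerD].
have qz_neq0 : qform D z != 0 by rewrite gt_eqF.
set c := qform D z in qz_gt0 qz_neq0 defD *; set v := D *m z.
have [Xz0 Yz0] := kerD z (deflate_mulmx qz_neq0).
exists (Y' + c^-1 *: (v *m v^T)); split => //; split => //.
- by rewrite raddfD /= linearZ /= sY trmx_mul trmxK.
- move=> y; rewrite qformD qformZ qform_outer.
  by rewrite addr_ge0 // mulr_ge0 ?invr_ge0 ?sqr_ge0 // ltW.
- by rewrite addrAC defD /deflate subrK.
- move=> w; have [k1 [k2 [-> Xk1 Yk2]]] := span w.
  pose a := c^-1 * (v^T *m k2) 0 0.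
  exists (k1 + a *: z), (k2 - a *: z); split.
  + by rewrite addrACA subrr addr0.
  + by rewrite mulmxDr -scalemxAr Xk1 Xz0 scaler0 addr0.
  have vk0 : (v^T *m (k2 - a *: z)) 0 0 = 0.
    rewrite mulmxBr -scalemxAr [LHS]mxE [(- (_ : 'M_1)) 0 0]mxE [(_ *: (_ : 'M_1)) 0 0]mxE.
    by rewrite dotmx_qform /a -/c; field.
  rewrite mulmxDl mulmxBr Yk2 -scalemxAr Yz0 scaler0 subr0 add0r.
  by rewrite -scalemxAl outer_mulmx vk0 scale0r scaler0.
- move=> w Dw0; have [Dzw0 defw0] := deflate_ker z sD Dw0.
  have [Xw0 Yw0] := kerD w defw0; split => //.
  by rewrite mulmxDl Yw0 -scalemxAl outer_mulmx Dzw0 scale0r scaler0 addr0.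
Qed.

Lemma psd_splitting_exists D : D^T = D -> exists X Y, psd_splitting D X Y.
Proof.
move: {2}(\rank D) (leqnn (\rank D)) => m; elim: m D => [|m IH] D rkD sD.
  have -> : D = 0 by apply/eqP; rewrite -mxrank_eq0 -leqn0.
  by exists 0, 0; apply: psd_splitting0.
have [->|D_neq0] := eqVneq D 0; first by exists 0, 0; apply: psd_splitting0.
have [z qz] := sym_anisotropic sD D_neq0.
have [X' [Y' split']] := IH _ (leq_trans (mxrank_deflate sD qz) rkD) (deflate_sym z sD).
have [qz_lt0|qz_gt0|qz0] := ltgtP (qform D z) 0; last by rewrite qz0 eqxx in qz.
- have sND : (- D)^T = - D by rewrite raddfN /= sD.
  have qNz_gt0 : 0 < qform (- D) z by rewrite qformN oppr_gt0.
  have splitN' : psd_splitting (deflate (- D) z) Y' X'.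
    by rewrite deflateN; apply: psd_splittingN.
  have [X [splitN _]] := psd_splitting_deflate sND qNz_gt0 splitN'.
  by exists X, Y'; rewrite -[D]opprK; apply: psd_splittingN.
- by have [Y [splitD _]] := psd_splitting_deflate sD qz_gt0 split'; exists X', Y.
Qed.

Lemma psd_splitting_ker D x : D^T = D -> 0 < qform D x \/ D *m x = 0 ->
  exists X Y, psd_splitting D X Y /\ X *m x = 0.
Proof.
move=> sD [qx_gt0|Dx0].
  have [X' [Y' split']] := psd_splitting_exists (deflate_sym x sD).
  by have [Y ?] := psd_splitting_deflate sD qx_gt0 split'; exists X', Y.
have [X [Y splitD]] := psd_splitting_exists sD.
by exists X, Y; split => //; case: splitD => _ _ _ _ _ _ /(_ x Dx0) [].
Qed.

Lemma psd_splitting_maximal_lower_bound A B X Y : A^T = A -> B^T = B ->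
  psd_splitting (B - A) X Y -> maximal_lower_bound A B (A - X).
Proof.
move=> sA sB [sX sY psdX psdY defY span _].
have BC : B - (A - X) = Y by rewrite opprB addrA addrAC -defY subrK.
split.
- by rewrite /symmx trmxB_sym.
- by apply/loewner_leE; rewrite opprB addrCA subrr addr0.
- by apply/loewner_leE; rewrite BC.
move=> C' sC' /loewner_leE psdP /loewner_leE le_A /loewner_leE le_B.
set P := C' - (A - X) in psdP.
have sP : P^T = P by rewrite !trmxB_sym.
have psdXP : psdmx (X - P) by rewrite /P opprB addrCA addrA subrK.
have psdYP : psdmx (Y - P) by rewrite -BC /P opprB opprD addrACA subrr addr0.
have P0 : P = 0.
  apply: mulmx_cV_eq0 => w; have [k1 [k2 [-> Xk1 Yk2]]] := span w.
  by rewrite mulmxDr (psd_le_ker sP psdP psdXP Xk1) (psd_le_ker sP psdP psdYP Yk2) addr0.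
by apply/eqP; rewrite -subr_eq0 -/P P0.
Qed.

End LowerBounds.

Theorem proposition4p5 (R : rcfType) (n : nat) (A B : 'M[R]_n) (x : 'cV[R]_n) :
  symmx A -> symmx B ->
  ((exists C : 'M[R]_n, maximal_lower_bound A B C /\ A *m x = C *m x) <->
   (qform A x < qform B x \/ A *m x = B *m x)).
Proof.
move=> sA sB; split.
  case=> C [[sC leCA leCB _] AxCx].
  have [ltAB|leBA] := ltP (qform A x) (qform B x); [by left | right].
  have qAC : qform A x = qform C x by rewrite /qform -!mulmxA AxCx.
  rewrite AxCx; apply: loewner_le_qform_eq => //.
  by apply/eqP; rewrite -qAC eq_le leBA andbT qAC leCB.
move=> cond; have sD : (B - A)^T = B - A by apply: trmxB_sym.
have [X [Y [splitD Xx0]]] : exists X Y, psd_splitting (B - A) X Y /\ X *m x = 0.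
  apply: psd_splitting_ker => //; case: cond => [?|ABx]; [left | right].
    by rewrite qformB subr_gt0.
  by rewrite mulmxBl ABx subrr.
exists (A - X); split; first exact: psd_splitting_maximal_lower_bound splitD.
by rewrite mulmxBl Xx0 subr0.
Qed.
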